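(* Let $n\geq1$ be an integer and let $\lambda,\lambda_1\in\mathbb{C}$ with $0<|\lambda_1|<|\lambda|<1$. Let $Q\in\mathcal{H}[1,n]$ satisfy $Q(z)\prec 1+\lambda_1 z$ $(z\in\mathbb{U})$. (1) Assume $|\lambda|^2+|\lambda_1|^2\leq 1$, and define $$\alpha_0=\begin{cases}\dfrac{1-|\lambda|}{1+|\lambda_1|}, & \text{if } 0<|\lambda|+|\lambda_1|\leq 1,\\[2mm] \dfrac{1-(|\lambda|^2+|\lambda_1|^2)}{2(1-|\lambda_1|^2)}, & \text{if } |\lambda|^2+|\lambda_1|^2\leq 1\leq |\lambda|+|\lambda_1|.\end{cases}$$ If $p\in\mathcal{H}[1,n]$ and $\alpha$ is a real number with $\alpha\leq\alpha_0$ such that $$Q(z)\,[\alpha+(1-\alpha)p(z)]\prec 1+\lambda z\qquad(z\in\mathbb{U}),$$ then $\operatorname{Re}(p(z))>0$ for all $z\in\mathbb{U}$. (2) Assume $|\lambda|+2|\lambda_1|\leq 1$. If $w\in\mathcal{H}[0,n]$ and $$Q(z)\,[1+w(z)]\prec 1+\lambda z\qquad (z\in\mathbb{U}),$$ then $$|w(z)|<\frac{|\lambda|+|\lambda_1|}{1-|\lambda_1|}\leq 1\qquad(z\in\mathbb{U}).$$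
   Context: $\mathbb{U}=\{z\in\mathbb{C}:|z|<1\}$. For $a_0\in\mathbb{C}$ and an integer $n\geq1$, $\mathcal{H}[a_0,n]$ denotes the class of functions analytic in $\mathbb{U}$ of the form $p(z)=a_0+\sum_{k=n}^\infty a_k z^k$. For $f,g$ analytic in $\mathbb{U}$, $f\prec g$ ($f$ is subordinate to $g$) means there is an analytic $w$ in $\mathbb{U}$ with $w(0)=0$, $|w(z)|<1$ on $\mathbb{U}$, and $f(z)=g(w(z))$; for $\lambda\neq0$, $q\prec 1+\lambda z$ means $q(0)=1$ and $|q(z)-1|<|\lambda|$ on $\mathbb{U}$. *)

From Stdlib Require Import Reals.
Open Scope R_scope.

Record Cx : Type := mkC { Re : R ; Im : R }.

Definition C0 : Cx := mkC 0 0.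
Definition C1 : Cx := mkC 1 0.
Definition RtoC (x : R) : Cx := mkC x 0.
Definition Cadd (u v : Cx) : Cx := mkC (Re u + Re v) (Im u + Im v).
Definition Copp (u : Cx) : Cx := mkC (- Re u) (- Im u).
Definition Csub (u v : Cx) : Cx := Cadd u (Copp v).
Definition Cmul (u v : Cx) : Cx :=
  mkC (Re u * Re v - Im u * Im v) (Re u * Im v + Im u * Re v).
Fixpoint Cpow (u : Cx) (k : nat) : Cx :=
  match k with O => C1 | S k' => Cmul u (Cpow u k') end.
Definition Cnorm (u : Cx) : R := sqrt (Re u * Re u + Im u * Im u).

Fixpoint psum (a : nat -> Cx) (z : Cx) (N : nat) : Cx :=
  match N with
  | O => a O
  | S N' => Cadd (psum a z N') (Cmul (a N) (Cpow z N))
  end.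

Definition series_to (a : nat -> Cx) (z l : Cx) : Prop :=
  forall eps : R, eps > 0 -> exists N0 : nat,
    forall N : nat, (N >= N0)%nat -> Cnorm (Csub (psum a z N) l) < eps.

Definition inU (z : Cx) : Prop := Cnorm z < 1.

(* f is analytic in U: f is given on U by a power series centered at 0
   (equivalent to holomorphy on U, since U is a disk centered at 0) *)
Definition analytic_U (f : Cx -> Cx) : Prop :=
  exists a : nat -> Cx, forall z, inU z -> series_to a z (f z).

Definition inH (a0 : Cx) (n : nat) (f : Cx -> Cx) : Prop :=
  exists a : nat -> Cx,
    a O = a0 /\ (forall k, (1 <= k)%nat -> (k < n)%nat -> a k = C0) /\
    (forall z, inU z -> series_to a z (f z)).

Definition subord (f g : Cx -> Cx) : Prop :=
  exists w : Cx -> Cx, analytic_U w /\ w C0 = C0 /\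
    (forall z, inU z -> Cnorm (w z) < 1) /\
    (forall z, inU z -> f z = g (w z)).

Definition lin (lam : Cx) : Cx -> Cx := fun z => Cadd C1 (Cmul lam z).

(* alpha_0 (both cases agree when |lam|+|lam1| = 1) *)
Definition alpha0 (l l1 : R) : R :=
  if Rle_dec (l + l1) 1 then (1 - l) / (1 + l1)
  else (1 - (l ^ 2 + l1 ^ 2)) / (2 * (1 - l1 ^ 2)).

(* Both parts are pointwise statements.  Fix z in U.  Since Q ≺ 1 + λ₁z and
   the product ≺ 1 + λz, we may write Q(z) = q = 1 + d with |d| < |λ₁| and
   Q(z)·v = 1 + e with |e| < |λ|, where v is the second factor at z.  The
   file first collects elementary facts on the modulus of complex numbers
   (multiplicativity, Cauchy–Schwarz, triangle inequality), then proves two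
   pure inequalities about the quotient v = (1 + e)/q:
   - Re v > α₀, obtained from  Re v·|q|² = Re q + ⟨q, e⟩ ≥ Re q − |q||λ|,
     Re q > (|q|² + 1 − |λ₁|²)/2  and the elementary bound
     α₀·s² ≤ (s² + 1 − |λ₁|²)/2 − s|λ| for 0 ≤ s ≤ 1 + |λ₁|;
   - if v = 1 + w then |w|(1 − |λ₁|) < |λ| + |λ₁|, since q·w = e − d and
     |q| > 1 − |λ₁|.
   Part (1) follows because α ≤ α₀ < 1 and Re v = α + (1 − α) Re p(z);
   part (2) is the second inequality divided by 1 − |λ₁|. *)
From Stdlib Require Import Reals Lra Psatz.
(* Re-imported after Reals so that C1 refers to the complex unit of Defs. *)
From Pilot Require Import Defs.
Open Scope R_scope.

Lemma Cx_ext (u v : Cx) : Re u = Re v -> Im u = Im v -> u = v.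
Proof. destruct u, v; simpl; intros -> ->; reflexivity. Qed.

Lemma Cnorm_nonneg (u : Cx) : 0 <= Cnorm u.
Proof. apply sqrt_pos. Qed.

Lemma Cnorm_sq (u : Cx) : Cnorm u * Cnorm u = Re u * Re u + Im u * Im u.
Proof. apply sqrt_sqrt; nra. Qed.

Lemma Cnorm_mul (u v : Cx) : Cnorm (Cmul u v) = Cnorm u * Cnorm v.
Proof.
  unfold Cnorm. rewrite <- sqrt_mult by nra. f_equal. simpl. ring.
Qed.

Lemma Cnorm_opp (u : Cx) : Cnorm (Copp u) = Cnorm u.
Proof. unfold Cnorm; simpl; f_equal; ring. Qed.

Lemma Cnorm_C1 : Cnorm C1 = 1.
Proof. unfold Cnorm; simpl. replace (1 * 1 + 0 * 0) with 1 by ring. apply sqrt_1. Qed.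

Lemma Cdot_le (u v : Cx) : Re u * Re v + Im u * Im v <= Cnorm u * Cnorm v.
Proof.
  pose proof (Cnorm_sq u). pose proof (Cnorm_sq v).
  pose proof (Cnorm_nonneg u). pose proof (Cnorm_nonneg v).
  assert (Hsq : (Re u * Re v + Im u * Im v) ^ 2 <= (Cnorm u * Cnorm v) ^ 2)
    by (pose proof (pow2_ge_0 (Re u * Im v - Im u * Re v)); nra).
  destruct (Rle_dec (Re u * Re v + Im u * Im v) (Cnorm u * Cnorm v)) as [|Hgt]; [lra|].
  exfalso. apply Rnot_le_lt in Hgt.
  assert (0 <= Cnorm u * Cnorm v) by (apply Rmult_le_pos; assumption).
  nra.
Qed.

Lemma Cdot_ge (u v : Cx) : - (Cnorm u * Cnorm v) <= Re u * Re v + Im u * Im v.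
Proof.
  pose proof (Cdot_le (Copp u) v) as H. rewrite Cnorm_opp in H. simpl in H. lra.
Qed.

Lemma Cnorm_add (u v : Cx) : Cnorm (Cadd u v) <= Cnorm u + Cnorm v.
Proof.
  pose proof (Cnorm_sq (Cadd u v)). pose proof (Cdot_le u v).
  pose proof (Cnorm_sq u). pose proof (Cnorm_sq v).
  pose proof (Cnorm_nonneg (Cadd u v)).
  pose proof (Cnorm_nonneg u). pose proof (Cnorm_nonneg v).
  simpl in *. nra.
Qed.

Lemma subord_lin_point (f : Cx -> Cx) (lam z : Cx) :
  0 < Cnorm lam -> subord f (lin lam) -> inU z ->
  exists d, Cnorm d < Cnorm lam /\ f z = Cadd C1 d.
Proof.
  intros Hlam [w [_ [_ [Hw Hf]]]] Hz.
  exists (Cmul lam (w z)). split; [|exact (Hf z Hz)].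
  rewrite Cnorm_mul. pose proof (Hw z Hz). nra.
Qed.

Lemma Re_near_one (d : Cx) (r : R) :
  Cnorm d < r -> Cnorm (Cadd C1 d) ^ 2 + 1 - r ^ 2 < 2 * Re (Cadd C1 d).
Proof.
  intro Hd. pose proof (Cnorm_sq d). pose proof (Cnorm_sq (Cadd C1 d)).
  pose proof (Cnorm_nonneg d). simpl in *. nra.
Qed.

Lemma alpha0_lt_1 (l l1 : R) : 0 < l1 -> l1 < l -> l < 1 -> alpha0 l l1 < 1.
Proof.
  intros. unfold alpha0. destruct (Rle_dec (l + l1) 1).
  - apply (Rmult_lt_reg_r (1 + l1)); [lra|].
    unfold Rdiv. rewrite Rmult_assoc, Rinv_l; lra.
  - apply (Rmult_lt_reg_r (2 * (1 - l1 ^ 2))); [nra|].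
    unfold Rdiv. rewrite Rmult_assoc, Rinv_l; nra.
Qed.

(* The first case of α₀ is the value at the
   endpoint s = 1 + l₁, the second is the interior minimum s = (1 − l₁²)/l. *)
Lemma alpha0_profile (l l1 s : R) :
  0 < l1 -> l1 < 1 -> 0 <= s <= 1 + l1 ->
  alpha0 l l1 * s ^ 2 <= (s ^ 2 + 1 - l1 ^ 2) / 2 - s * l.
Proof.
  intros Hl1 Hl1' Hs. unfold alpha0. destruct (Rle_dec (l + l1) 1).
  - assert (Hfac : 0 <= (1 + l1 - s) * ((1 + l1) * (1 - l1) + (1 - l1 - 2 * l) * s))
      by (apply Rmult_le_pos; [lra | destruct (Rle_dec 0 (1 - l1 - 2 * l)); nra]).
    assert (Hid : (s ^ 2 + 1 - l1 ^ 2) / 2 - s * l - (1 - l) / (1 + l1) * s ^ 2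
        = (1 + l1 - s) * ((1 + l1) * (1 - l1) + (1 - l1 - 2 * l) * s) / (2 * (1 + l1)))
      by (field; lra).
    assert (0 <= (1 + l1 - s) * ((1 + l1) * (1 - l1) + (1 - l1 - 2 * l) * s)
                 / (2 * (1 + l1))) by (unfold Rdiv; apply Rmult_le_pos; [|apply Rlt_le, Rinv_0_lt_compat]; lra).
    lra.
  - assert (Hid : (s ^ 2 + 1 - l1 ^ 2) / 2 - s * l
                  - (1 - (l ^ 2 + l1 ^ 2)) / (2 * (1 - l1 ^ 2)) * s ^ 2
        = ((1 - l1 ^ 2) - l * s) ^ 2 / (2 * (1 - l1 ^ 2))) by (field; nra).
    assert (0 <= ((1 - l1 ^ 2) - l * s) ^ 2 / (2 * (1 - l1 ^ 2)))
      by (unfold Rdiv; apply Rmult_le_pos;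
          [apply pow2_ge_0 | apply Rlt_le, Rinv_0_lt_compat; nra]).
    lra.
Qed.

Lemma Re_quotient_gt_alpha0 (d e v : Cx) (l l1 : R) :
  0 < l1 < 1 -> Cnorm d < l1 -> Cnorm e < l ->
  Cmul (Cadd C1 d) v = Cadd C1 e -> Re v > alpha0 l l1.
Proof.
  intros Hl1 Hd He Hqv.
  set (q := Cadd C1 d) in *. set (s := Cnorm q).
  assert (Hs0 : 0 <= s) by apply Cnorm_nonneg.
  assert (Hs_ub : s <= 1 + l1)
    by (pose proof (Cnorm_add C1 d); rewrite Cnorm_C1 in *; unfold s, q; lra).
  assert (Hre : s ^ 2 + 1 - l1 ^ 2 < 2 * Re q) by apply Re_near_one, Hd.
  clearbody q.
  (* Re v · |q|² = Re q + ⟨q, e⟩, read off from q·v = 1 + e *)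
  assert (Hv : Re v * (s * s) = Re q + (Re q * Re e + Im q * Im e)).
  { unfold s; rewrite Cnorm_sq.
    pose proof (f_equal Re Hqv) as Er; pose proof (f_equal Im Hqv) as Ei.
    simpl in Er, Ei |- *. nra. }
  (* s ≥ Re q > 0 *)
  assert (Hspos : 0 < s).
  { pose proof (Cdot_le q C1) as Hc. rewrite Cnorm_C1 in Hc. simpl in Hc. fold s in Hc.
    assert (0 < 1 - l1 ^ 2) by nra.
    pose proof (pow2_ge_0 s). lra. }
  assert (Hdot : - (s * l) < Re q * Re e + Im q * Im e).
  { pose proof (Cdot_ge q e) as Hcs. fold s in Hcs.
    assert (s * Cnorm e < s * l) by (apply Rmult_lt_compat_l; assumption). lra. }
  pose proof (alpha0_profile l l1 s ltac:(lra) ltac:(lra) ltac:(lra)) as Hprof.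
  assert (Hgt : alpha0 l l1 * (s * s) < Re v * (s * s)) by (simpl in *; nra).
  apply Rmult_lt_reg_r in Hgt; [lra | nra].
Qed.

Lemma quotient_deviation_bound (d e w : Cx) (l l1 : R) :
  l1 < 1 -> Cnorm d < l1 -> Cnorm e < l ->
  Cmul (Cadd C1 d) (Cadd C1 w) = Cadd C1 e -> Cnorm w * (1 - l1) < l + l1.
Proof.
  intros Hl1 Hd He Hqw.
  set (q := Cadd C1 d) in *.
  (* |q| ≥ 1 − |d| since 1 = q − d *)
  assert (Hq : 1 <= Cnorm q + Cnorm d).
  { assert (Hone : C1 = Cadd q (Copp d))
      by (apply Cx_ext; unfold q; simpl; ring).
    pose proof (Cnorm_add q (Copp d)) as T.
    rewrite <- Hone, Cnorm_C1, Cnorm_opp in T. exact T. }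
  (* |q|·|w| ≤ |e| + |d| since q·w = e − d *)
  assert (Hqw' : Cnorm q * Cnorm w <= Cnorm e + Cnorm d).
  { assert (Hdiff : Cmul q w = Cadd e (Copp d)).
    { pose proof (f_equal Re Hqw) as Er; pose proof (f_equal Im Hqw) as Ei.
      apply Cx_ext; unfold q in *; simpl in *; lra. }
    pose proof (Cnorm_add e (Copp d)) as T.
    rewrite <- Hdiff, Cnorm_mul, Cnorm_opp in T. exact T. }
  pose proof (Cnorm_nonneg w). pose proof (Cnorm_nonneg d). nra.
Qed.

Theorem lemma3 (n : nat) (lam lam1 : Cx) (Q : Cx -> Cx) :
  (1 <= n)%nat ->
  0 < Cnorm lam1 -> Cnorm lam1 < Cnorm lam -> Cnorm lam < 1 ->
  inH C1 n Q ->
  subord Q (lin lam1) ->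
  (Cnorm lam ^ 2 + Cnorm lam1 ^ 2 <= 1 ->
   forall (p : Cx -> Cx) (alpha : R),
     inH C1 n p ->
     alpha <= alpha0 (Cnorm lam) (Cnorm lam1) ->
     subord (fun z => Cmul (Q z) (Cadd (RtoC alpha) (Cmul (RtoC (1 - alpha)) (p z))))
            (lin lam) ->
     forall z, inU z -> Re (p z) > 0)
  /\
  (Cnorm lam + 2 * Cnorm lam1 <= 1 ->
   forall w : Cx -> Cx,
     inH C0 n w ->
     subord (fun z => Cmul (Q z) (Cadd C1 (w z))) (lin lam) ->
     forall z, inU z ->
       Cnorm (w z) < (Cnorm lam + Cnorm lam1) / (1 - Cnorm lam1) /\
       (Cnorm lam + Cnorm lam1) / (1 - Cnorm lam1) <= 1).
Proof.
  intros _ Hl1 Hll1 Hl _ HQ.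
  split.
  - intros _ p alpha _ Halpha Hprod z Hz.
    destruct (subord_lin_point Q lam1 z Hl1 HQ Hz) as [d [Hd HQz]].
    destruct (subord_lin_point _ lam z ltac:(lra) Hprod Hz) as [e [He Hez]].
    simpl in Hez. rewrite HQz in Hez.
    pose proof (Re_quotient_gt_alpha0 d e _ (Cnorm lam) (Cnorm lam1) ltac:(lra) Hd He Hez) as Hv.
    pose proof (alpha0_lt_1 _ _ Hl1 Hll1 Hl).
    (* Re v = α + (1 − α) Re p(z) > α₀ ≥ α with 1 − α > 0 *)
    simpl in Hv.
    apply (Rmult_lt_reg_l (1 - alpha)); lra.
  - intros Hsmall w _ Hprod z Hz.
    destruct (subord_lin_point Q lam1 z Hl1 HQ Hz) as [d [Hd HQz]].
    destruct (subord_lin_point _ lam z ltac:(lra) Hprod Hz) as [e [He Hez]].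
    simpl in Hez. rewrite HQz in Hez.
    pose proof (quotient_deviation_bound d e (w z) (Cnorm lam) (Cnorm lam1) ltac:(lra) Hd He Hez).
    assert (Hpos : 0 < 1 - Cnorm lam1) by lra.
    split.
    + apply (Rmult_lt_reg_r _ _ _ Hpos). unfold Rdiv. rewrite Rmult_assoc, Rinv_l; lra.
    + apply (Rmult_le_reg_r _ _ _ Hpos). unfold Rdiv. rewrite Rmult_assoc, Rinv_l; lra.
Qed.
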